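(* Let $G$ be a commutative group, $G'$ a subgroup of $G$, and $U\subset G'$ a finite set. Then $\beta(U,G)=\beta(U,G')$.
   Context: For a finite set $U$ in a commutative group $K$, $\beta(U,K)=\inf_{A,B}\frac{|A+B+U|}{\sqrt{|A||B|}}$, where the infimum is over all nonempty finite $A,B\subset K$ (so the ambient group over which $A,B$ range is indicated). *)

From HB Require Import structures.
From mathcomp Require Import all_boot all_order all_algebra.
From mathcomp Require Import finmap.
From mathcomp Require Import boolp classical_sets reals.
Set Implicit Arguments.
Unset Strict Implicit.
Unset Printing Implicit Defensive.
Import Order.TTheory GRing.Theory Num.Theory.
Local Open Scope fset_scope.
Local Open Scope ring_scope.
Local Open Scope classical_set_scope.

Definition sumset (K : zmodType) (A B : {fset K}) : {fset K} :=
  [fset a + b | a in A, b in B].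

Definition beta_ratios (R : realType) (K : zmodType) (U : {fset K}) : set R :=
  [set r | exists A B : {fset K},
      [/\ A != fset0, B != fset0 &
          r = (#|` sumset (sumset A B) U|)%:R
              / Num.sqrt ((#|` A|)%:R * (#|` B|)%:R)]].

Definition beta (R : realType) (K : zmodType) (U : {fset K}) : R :=
  inf (@beta_ratios R K U).
Arguments beta R {K} U.

From HB Require Import structures.
From mathcomp Require Import all_boot all_order all_algebra.
From mathcomp Require Import finmap.
From mathcomp Require Import boolp classical_sets reals.
From mathcomp Require Import ring zify.
Import Order.TTheory GRing.Theory Num.Theory.
Local Open Scope fset_scope.
Local Open Scope ring_scope.

(* One inequality is immediate: f maps a pair (A, B) of subsets of G' to a pair
   of subsets of G with the same ratio. Conversely, let A, B be finite subsets of
   G and cut them along the cosets of H := f G'. A translate p + f P of a subset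
   of G' lies in one coset, so for the pieces B_j of B the sets
   (p + f P) + B_j + f U lie in distinct cosets; translated back into G' each has
   at least beta(U) sqrt(|P| |B_j|) elements. Taking for p + f P the largest piece
   A_0 of A, and writing B_0 for the largest piece of B, summing over j gives
   |A + B + U| >= beta(U) sqrt(|A_0| / |B_0|) |B|, and symmetrically
   |A + B + U| >= beta(U) sqrt(|B_0| / |A_0|) |A|; multiplying the two bounds
   gives |A + B + U|^2 >= beta(U)^2 |A| |B|. *)

Section Sumset.
Variable K : zmodType.
Implicit Types A B C : {fset K}.

Lemma sumsetP A B z :
  reflect (exists2 a, a \in A & exists2 b, b \in B & z = a + b) (z \in sumset A B).
Proof. exact: imfset2P. Qed.

Lemma mem_sumset A B a b : a \in A -> b \in B -> a + b \in sumset A B.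
Proof. by move=> aA bB; apply/sumsetP; exists a => //; exists b. Qed.

Lemma sumsetC A B : sumset A B = sumset B A.
Proof.
by apply/fsetP=> z; apply/sumsetP/sumsetP=> -[a aA [b bB ->]];
  exists b => //; exists a => //; rewrite addrC.
Qed.

Lemma sumsetS A A' B B' : A `<=` A' -> B `<=` B' -> sumset A B `<=` sumset A' B'.
Proof.
move=> /fsubsetP sA /fsubsetP sB; apply/fsubsetP=> _ /sumsetP[a aA [b bB ->]].
by rewrite mem_sumset ?sA ?sB.
Qed.

Lemma sumsetUr A B C : sumset A (B `|` C) = sumset A B `|` sumset A C.
Proof.
apply/fsetP=> z; rewrite inE; apply/sumsetP/orP.
  by move=> [a aA [d]]; rewrite inE => /orP[] dBC ->; [left | right];
    rewrite mem_sumset.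
by move=> [] /sumsetP[a aA [d dBC ->]]; exists a => //; exists d;
  rewrite ?inE ?dBC ?orbT.
Qed.

Lemma sumsetUl A B C : sumset (A `|` B) C = sumset A C `|` sumset B C.
Proof. by rewrite sumsetC sumsetUr !(sumsetC C). Qed.

End Sumset.

Section Beta.
Variables (R : realType) (K : zmodType) (V : {fset K}).

Lemma beta_ratios_ge0 r : @beta_ratios R _ V r -> 0 <= r.
Proof. by move=> [A [B [_ _ ->]]]; rewrite divr_ge0 ?sqrtr_ge0. Qed.

Lemma beta_ratios_neq0 : (@beta_ratios R _ V !=set0)%classic.
Proof.
have A0 : [fset (0 : K)] != fset0 by apply/fset0Pn; exists 0; rewrite inE.
by eexists; exists [fset 0], [fset 0].
Qed.

Lemma beta_ge0 : 0 <= beta R V.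
Proof. exact: lb_le_inf beta_ratios_neq0 beta_ratios_ge0. Qed.

Lemma beta_le_ratio A B : A != fset0 -> B != fset0 ->
  beta R V <= #|` sumset (sumset A B) V|%:R / Num.sqrt (#|` A|%:R * #|` B|%:R).
Proof.
by move=> A0 B0; apply: ge_inf; [exists 0 => r /beta_ratios_ge0 | exists A, B].
Qed.

Lemma beta_mul_sqrt_le A B : A != fset0 -> B != fset0 ->
  beta R V * Num.sqrt (#|` A|%:R * #|` B|%:R) <= #|` sumset (sumset A B) V|%:R.
Proof.
move=> A0 B0; rewrite -ler_pdivlMr ?beta_le_ratio //.
by rewrite sqrtr_gt0 mulr_gt0 // ltr0n lt0n cardfs_eq0.
Qed.

Lemma lb_le_beta b :
  (forall A B, A != fset0 -> B != fset0 ->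
     b <= #|` sumset (sumset A B) V|%:R / Num.sqrt (#|` A|%:R * #|` B|%:R)) ->
  b <= beta R V.
Proof.
by move=> lb; apply: lb_le_inf beta_ratios_neq0 _ => _ [A [B [A0 B0 ->]]]; apply: lb.
Qed.

End Beta.

Lemma fset_argmax {T : choiceType} (g : T -> nat) {X : {fset T}} :
  X != fset0 -> exists2 a, a \in X & {in X, forall x, (g x <= g a)%N}.
Proof.
elim/fset1U_rect: X => [|x X _ IH _]; first by rewrite eqxx.
have [-> | /IH[a aX ga]] := eqVneq (X : {fset T}) fset0.
  by exists x; rewrite ?fset1U1 // => y; rewrite fsetU0 inE => /eqP ->.
have [gxa | gax] := leqP (g x) (g a).
  by exists a; rewrite ?fset1Ur // => y /fset1UP[-> | /ga].
exists x; rewrite ?fset1U1 // => y /fset1UP[-> // | /ga gya].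
exact: leq_trans gya (ltnW gax).
Qed.

Lemma fset_sub_range (T T' : choiceType) (g : T -> T') (X : {fset T'}) :
  {subset X <= range g} -> exists X' : {fset T}, X = [fset g x | x in X'].
Proof.
elim/fset1U_rect: X => [|y X _ IH] Xg; first by exists fset0; rewrite imfset0.
have [x _ gx] : range g y by rewrite -inE Xg ?fset1U1.
have [X' ->] := IH (fun z zX => Xg z (fset1Ur _ zX)).
by exists (x |` X'); rewrite imfsetU1 gx.
Qed.

Section SqrtBounds.
Variable R : rcfType.

Lemma mul_sqrt_le_of_le (b p c m s : R) : 0 <= b -> 0 <= p -> 0 <= c -> c <= m ->
  b * Num.sqrt (p * c) <= s -> b * Num.sqrt p * c <= Num.sqrt m * s.
Proof.
move=> b0 p0 c0 cm bs.
have sc0 : 0 <= Num.sqrt c by rewrite sqrtr_ge0.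
have scm : Num.sqrt c <= Num.sqrt m by rewrite ler_sqrt // (le_trans c0).
rewrite -[c in X in X <= _](sqr_sqrtr c0) expr2 mulrA -(mulrA b) -sqrtrM //.
by rewrite mulrC; apply: ler_pM; rewrite // mulr_ge0 // sqrtr_ge0.
Qed.

Lemma mul_sqrt_le_of_cross (b x y a c s : R) : 0 <= b -> 0 < x -> 0 < y ->
  0 <= a -> 0 <= c -> 0 <= s ->
  b * x * c <= y * s -> b * y * a <= x * s -> b * Num.sqrt (a * c) <= s.
Proof.
move=> b0 x0 y0 a0 c0 s0 h1 h2.
have bac : b ^+ 2 * (a * c) <= s ^+ 2.
  rewrite -(ler_pM2l (mulr_gt0 x0 y0)).
  have -> : x * y * (b ^+ 2 * (a * c)) = (b * x * c) * (b * y * a) by ring.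
  have -> : x * y * s ^+ 2 = (y * s) * (x * s) by ring.
  by rewrite ler_pM // !mulr_ge0 // ltW.
rewrite -(ler_sqr (_ : _ \is Num.nneg)) ?nnegrE ?mulr_ge0 ?sqrtr_ge0 //.
by rewrite exprMn sqr_sqrtr ?mulr_ge0.
Qed.

End SqrtBounds.

Section AdditiveRange.
Variables (U V : zmodType) (f : {additive U -> V}).

Lemma range_addr a c : a \in range f -> c \in range f -> a + c \in range f.
Proof. by move=> /set_mem[x _ <-] /set_mem[y _ <-]; rewrite -raddfD mem_range. Qed.

Lemma range_subr a c : a \in range f -> c \in range f -> a - c \in range f.
Proof. by move=> /set_mem[x _ <-] /set_mem[y _ <-]; rewrite -raddfB mem_range. Qed.

End AdditiveRange.

Section SubgroupImage.
Variables (R : realType) (G G' : zmodType) (f : {additive G' -> G}).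
Hypothesis f_inj : injective f.
Variable U : {fset G'}.
Implicit Types (p c b z : G) (P C X : {fset G'}) (A B D : {fset G}).

Local Notation fU := [fset f u | u in U].
Local Notation img c X := [fset c + f x | x in X].

Lemma card_img c X : #|` img c X| = #|` X|.
Proof. by rewrite card_imfset // => x y /addrI /f_inj. Qed.

Lemma img_eq0 c X : (img c X == fset0) = (X == fset0).
Proof. by rewrite -!cardfs_eq0 card_img. Qed.

Lemma sumset_img p c P C :
  sumset (sumset (img p P) (img c C)) fU = img (p + c) (sumset (sumset P C) U).
Proof.
apply/fsetP=> z; apply/sumsetP/imfsetP.
  move=> [_ /sumsetP[_ /imfsetP[x xP ->] [_ /imfsetP[y yC ->] ->]]].
  move=> [_ /imfsetP[u uU ->] ->]; exists (x + y + u); rewrite ?mem_sumset //.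
  by rewrite !raddfD addrACA !addrA.
move=> [_ /sumsetP[_ /sumsetP[x xP [y yC ->]] [u uU ->]] ->].
exists (p + f x + (c + f y)).
  by apply: mem_sumset; apply/imfsetP; [exists x | exists y].
exists (f u); first by apply/imfsetP; exists u.
by rewrite !raddfD [p + f x + _]addrACA !addrA.
Qed.

Lemma beta_mul_sqrt_le_img p c P C : P != fset0 -> C != fset0 ->
  beta R U * Num.sqrt (#|` img p P|%:R * #|` img c C|%:R)
    <= #|` sumset (sumset (img p P) (img c C)) fU|%:R.
Proof. by rewrite sumset_img !card_img; exact: beta_mul_sqrt_le. Qed.

Lemma beta_image_le : beta R fU <= beta R U.
Proof.
apply: lb_le_beta => A B A0 B0.
rewrite -(card_img 0 A) -(card_img 0 B) -(card_img (0 + 0) (sumset _ _)).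
rewrite -sumset_img.
by apply: beta_le_ratio; rewrite img_eq0.
Qed.

Definition coset_part (B : {fset G}) b := [fset x in B | x - b \in range f].

Lemma in_coset_part B b x :
  (x \in coset_part B b) = (x \in B) && (x - b \in range f).
Proof. by rewrite !inE. Qed.

Lemma coset_part_sub B b : coset_part B b `<=` B.
Proof. by apply/fsubsetP=> x; rewrite in_coset_part => /andP[]. Qed.

Lemma coset_partS B (B' : {fset G}) b :
  B `<=` B' -> coset_part B b `<=` coset_part B' b.
Proof.
move=> /fsubsetP sB; apply/fsubsetP=> x; rewrite !in_coset_part => /andP[xB ->].
by rewrite sB.
Qed.

Lemma mem_coset_part B b : b \in B -> b \in coset_part B b.
Proof. by move=> bB; rewrite in_coset_part bB subrr -(raddf0 f) mem_range. Qed.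

Lemma coset_part_neq0 B b : b \in B -> coset_part B b != fset0.
Proof. by move=> /mem_coset_part bb; apply/fset0Pn; exists b. Qed.

Lemma coset_part_img B b : exists C, coset_part B b = img b C.
Proof.
apply: fset_sub_range => x; rewrite in_coset_part => /andP[_ /set_mem[z _ fz]].
by apply/mem_set; exists z => //; rewrite fz addrC subrK.
Qed.

Lemma sumset_img_coset p P D z : z \in sumset (sumset (img p P) D) fU ->
  exists2 d, d \in D & z - (p + d) \in range f.
Proof.
move=> /sumsetP[_ /sumsetP[_ /imfsetP[x _ ->] [d dD ->]] [_ /imfsetP[u _ ->] ->]].
by exists d; rewrite // [p + f x]addrC -(addrA (f x)) addrAC addrK -raddfD mem_range.
Qed.

Lemma coset_part_sumset_disjoint p P B b :
  [disjoint sumset (sumset (img p P) (coset_part B b)) fU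
          & sumset (sumset (img p P) (B `\` coset_part B b)) fU].
Proof.
apply/fdisjointP=> z /sumset_img_coset[d]; rewrite in_coset_part => /andP[_ db] zd.
apply/negP=> /sumset_img_coset[d']; rewrite in_fsetD => /andP[/negP d'b d'B] zd'.
apply: d'b; rewrite in_coset_part d'B /=.
have -> : d' - b = (d - b) + ((z - (p + d)) - (z - (p + d'))).
  rewrite opprB [z - _ + _]addrC subrKA [p + d']addrC addrKA.
  by rewrite [d - b + _]addrC subrKA.
by apply: range_addr => //; apply: range_subr.
Qed.

Lemma card_sumset_coset_split p P B b :
  #|` sumset (sumset (img p P) B) fU| =
  (#|` sumset (sumset (img p P) (coset_part B b)) fU|
   + #|` sumset (sumset (img p P) (B `\` coset_part B b)) fU|)%N.
Proof.
have /fsetIidPr BI := coset_part_sub B b.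
rewrite -{1}(fsetID (coset_part B b) B) BI sumsetUr sumsetUl.
by apply/eqP; rewrite (leq_card_fsetU _ _).2 coset_part_sumset_disjoint.
Qed.

Lemma beta_mul_sqrt_card_le p P m B : P != fset0 ->
  {in B, forall b, (#|` coset_part B b| <= m)%N} ->
  beta R U * Num.sqrt #|` img p P|%:R * #|` B|%:R
    <= Num.sqrt m%:R * #|` sumset (sumset (img p P) B) fU|%:R.
Proof.
move=> P0; have [n] := ubnP #|` B|; elim: n B => // n IH B /ltnSE leBn Bm.
have [-> | /fset0Pn[b bB]] := eqVneq B fset0.
  by rewrite cardfs0 mulr0 mulr_ge0 ?sqrtr_ge0.
have sBb := coset_part_sub B b.
have Bb0 : (0 < #|` coset_part B b|)%N by rewrite lt0n cardfs_eq0 coset_part_neq0.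
have cardB : #|` B| = (#|` coset_part B b| + #|` B `\` coset_part B b|)%N.
  by rewrite cardfsDS // subnKC // fsubset_leq_card.
rewrite (card_sumset_coset_split _ _ _ b) cardB !natrD !mulrDr lerD //.
  have [C eC] := coset_part_img B b; rewrite eC.
  apply: mul_sqrt_le_of_le; rewrite ?beta_ge0 ?ler0n ?ler_nat -?eC ?Bm //.
  rewrite eC; apply: beta_mul_sqrt_le_img => //.
  by rewrite -(img_eq0 b) -eC coset_part_neq0.
apply: IH => [|x]; first by move: leBn; rewrite cardB; lia.
rewrite in_fsetD => /andP[_ xB]; apply: leq_trans (Bm x xB).
by apply/fsubset_leq_card/coset_partS/fsubsetDl.
Qed.

Lemma beta_le_ratio_image A B : A != fset0 -> B != fset0 ->
  beta R U <= #|` sumset (sumset A B) fU|%:R / Num.sqrt (#|` A|%:R * #|` B|%:R).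
Proof.
move=> A0 B0.
have [a aA maxA] := fset_argmax (fun a => #|` coset_part A a|) A0.
have [b bB maxB] := fset_argmax (fun b => #|` coset_part B b|) B0.
have [P eP] := coset_part_img A a; have [Q eQ] := coset_part_img B b.
have P0 : P != fset0 by rewrite -(img_eq0 a) -eP coset_part_neq0.
have Q0 : Q != fset0 by rewrite -(img_eq0 b) -eQ coset_part_neq0.
have leA := beta_mul_sqrt_card_le a _ _ _ P0 maxB; rewrite -eP in leA.
have leB := beta_mul_sqrt_card_le b _ _ _ Q0 maxA; rewrite -eQ in leB.
have subA : sumset (sumset (coset_part A a) B) fU `<=` sumset (sumset A B) fU.
  by rewrite sumsetS ?sumsetS ?coset_part_sub.
have subB : sumset (sumset (coset_part B b) A) fU `<=` sumset (sumset A B) fU.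
  by rewrite sumsetS // [sumset A B]sumsetC sumsetS ?coset_part_sub.
have sqrt_gt0 D d : d \in D -> 0 < Num.sqrt #|` coset_part D d|%:R :> R.
  by move=> dD; rewrite sqrtr_gt0 ltr0n lt0n cardfs_eq0 coset_part_neq0.
rewrite ler_pdivlMr ?sqrtr_gt0 ?mulr_gt0 // ?ltr0n ?lt0n ?cardfs_eq0 //.
apply: (@mul_sqrt_le_of_cross _ _ (Num.sqrt #|` coset_part A a|%:R)
                                   (Num.sqrt #|` coset_part B b|%:R));
  rewrite ?beta_ge0 ?ler0n ?sqrt_gt0 //.
  by apply: (le_trans leA); rewrite ler_wpM2l ?sqrtr_ge0 ?ler_nat ?fsubset_leq_card.
by apply: (le_trans leB); rewrite ler_wpM2l ?sqrtr_ge0 ?ler_nat ?fsubset_leq_card.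
Qed.

End SubgroupImage.

Theorem mainTheorem5 (R : realType) (G G' : zmodType) (f : G' -> G)
  (f_add : forall x y : G', f (x + y) = f x + f y) (f_inj : injective f)
  (U : {fset G'}) :
  beta R [fset f u | u in U] = beta R U.
Proof.
have f0 : f 0 = 0 by apply: (addrI (f 0)); rewrite -f_add !addr0.
pose fa := HB.pack_for {additive G' -> G} f
  (GRing.isNmodMorphism.Build G' G f (f0, f_add)).
apply/le_anti/andP; split; first exact: (beta_image_le _ _ _ fa f_inj).
exact/lb_le_beta/(beta_le_ratio_image _ _ _ fa f_inj).
Qed.
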